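(* Let $n\in\mathbb{N}$. For every $i=0,1,\dots,2n-1$, $$\sum_{j=\lfloor i/2\rfloor}^{n-1}\binom{n-1}{j}\left(\binom{n}{j+1}\binom{2j+1}{i}-\binom{n}{j}\binom{2j}{i}\right)\geq 0.$$
   Context: Binomial coefficients $\binom{a}{b}$ with integer $0\le a<b$ are $0$; $\lfloor\cdot\rfloor$ is the integer part. *)

From mathcomp Require Import all_boot all_order all_algebra.
Set Implicit Arguments. Unset Strict Implicit. Unset Printing Implicit Defensive.

From mathcomp Require Import all_boot all_order all_algebra.
From mathcomp Require Import ring zify.
Import Order.TTheory GRing.Theory Num.Theory.
Local Open Scope ring_scope.

(* Write n = m + 1 and b = 1 + x. The sum is the coefficient of x^i in
   P = sum_j C(m,j) (C(m+1,j+1) b^(2j+1) - C(m+1,j) b^(2j)), and the two halves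
   of P are the coefficients of t^m and t^(m+1) in (1 + b t)^m (b + t)^(m+1).
   Since (1 + b t)(b + t) = (b - 1)^2 t + b (1 + t)^2, expanding the m-th power
   by the binomial theorem gives
   P = x * sum_k C(m,k) x^(2(m-k)) (1 + x)^k (C(2k,k) - C(2k,k+1)),
   a polynomial in x with nonnegative coefficients, C(2k,k) - C(2k,k+1) being a
   Catalan number. *)

Lemma coef_CaddX_exp (R : comNzRingType) (c : R) N l :
  ((c%:P + 'X) ^+ N)`_l = c ^+ (N - l) *+ 'C(N, l).
Proof.
rewrite exprDn.
have -> : \sum_(i < N.+1) c%:P ^+ (N - i) * 'X ^+ i *+ 'C(N, i)
          = \poly_(i < N.+1) (c ^+ (N - i) *+ 'C(N, i)).
  rewrite poly_def; apply: eq_bigr => i _.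
  by rewrite -mul_polyC polyCMn rmorphXn mulrnAl.
by rewrite coef_poly ltnS; case: leqP => // /bin_small->.
Qed.

Lemma coef_1addCX_exp (R : comNzRingType) (c : R) N l :
  ((1 + c%:P * 'X) ^+ N)`_l = c ^+ l *+ 'C(N, l).
Proof.
rewrite exprDn.
have -> : \sum_(i < N.+1) 1 ^+ (N - i) * (c%:P * 'X) ^+ i *+ 'C(N, i)
          = \poly_(i < N.+1) (c ^+ i *+ 'C(N, i)).
  rewrite poly_def; apply: eq_bigr => i _.
  by rewrite expr1n mul1r exprMn -mul_polyC polyCMn rmorphXn mulrnAl.
by rewrite coef_poly ltnS; case: leqP => // /bin_small->.
Qed.

Lemma leq_bin_central k : ('C(k.*2, k.+1) <= 'C(k.*2, k))%N.
Proof.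
have := mul_bin_left k.*2 k; rewrite -addnn addnK addnn => eq_bin.
by rewrite -(@leq_pmul2l k.+1) // eq_bin leq_mul2r leqnSn orbT.
Qed.

Section BinomialGeneratingPolynomial.

Variables (R : comNzRingType) (b : R) (m : nat).

Let gen : {poly R} := (1 + b%:P * 'X) ^+ m * (b%:P + 'X) ^+ m.+1.

Lemma coef_gen_m :
  gen`_m = \sum_(j < m.+1) ('C(m, j) * 'C(m.+1, j.+1))%:R * b ^+ j.*2.+1.
Proof.
rewrite coefM; apply: eq_bigr => [[j /= le_jm]] _.
rewrite coef_1addCX_exp coef_CaddX_exp subSn ?leq_subr // subKn //.
rewrite -subSS bin_sub // -addnn !exprS exprD.
ring.
Qed.

Lemma coef_gen_mS :
  gen`_m.+1 = \sum_(j < m.+1) ('C(m, j) * 'C(m.+1, j))%:R * b ^+ j.*2.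
Proof.
rewrite coefM big_ord_recr /= coef_1addCX_exp bin_small // mulr0n mul0r addr0.
apply: eq_bigr => [[j /= lt_jSm]] _.
rewrite coef_1addCX_exp coef_CaddX_exp subKn 1?ltnW // bin_sub 1?ltnW //.
rewrite -addnn exprD.
ring.
Qed.

Lemma gen_expansion :
  gen = \sum_(k < m.+1) ((b - 1) ^+ (m - k).*2 * b ^+ k *+ 'C(m, k))%:P *
          ('X^(m - k) * ((1 + 'X) ^+ k.*2 * (b%:P + 'X))).
Proof.
have factor : (1 + b%:P * 'X) * (b%:P + 'X)
              = ((b - 1)%:P) ^+ 2 * 'X + b%:P * (1 + 'X) ^+ 2 :> {poly R}.
  rewrite polyCB polyC1; ring.
have -> : gen = (b%:P + 'X) * ((1 + b%:P * 'X) * (b%:P + 'X)) ^+ m.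
  by rewrite /gen exprMn exprS; ring.
rewrite factor exprDn mulr_sumr; apply: eq_bigr => k _.
rewrite -!mul2n !exprM polyCMn (polyCM (_ ^+ _)) !polyC_exp !exprMn.
ring.
Qed.

Lemma coef_central_diff k :
  ((1 + 'X) ^+ k.*2 * (b%:P + 'X))`_k - ((1 + 'X) ^+ k.*2 * (b%:P + 'X))`_k.+1
  = (b - 1) * ('C(k.*2, k)%:R - 'C(k.*2, k.+1)%:R).
Proof.
have coef_l l : ((1 + 'X) ^+ k.*2 * (b%:P + 'X))`_l
                = b * 'C(k.*2, l)%:R + (if l == 0%N then 0 else 'C(k.*2, l.-1)%:R).
  rewrite mulrDr coefD mulrC coefCM coefMX -polyC1 coef_CaddX_exp expr1n mulr_natr.
  by case: (l == 0%N); rewrite // coef_CaddX_exp expr1n.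
rewrite !coef_l {coef_l} /=; case: k => [|k]; first by rewrite double0 !bin0n /=; ring.
have bin_pred : 'C(k.+1.*2, k) = 'C(k.+1.*2, k.+2).
  rewrite -[RHS]bin_sub; last by rewrite -addnn addSn addnS !ltnS leq_addl.
  by rewrite -addnn addSn addnS !subSS addnK.
rewrite bin_pred; ring.
Qed.

Lemma coef_gen_diff :
  gen`_m - gen`_m.+1 = (b - 1) * \sum_(k < m.+1) ('C(m, k)%:R * (b - 1) ^+ (m - k).*2
                         * b ^+ k * ('C(k.*2, k)%:R - 'C(k.*2, k.+1)%:R)).
Proof.
rewrite gen_expansion !coef_sum -sumrB mulr_sumr; apply: eq_bigr => [[k /= le_km]] _.
rewrite !coefCM !coefXnM ltnNge leq_subr /= ltnNge (leq_trans (leq_subr _ _) (leqnSn _)) /=.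
rewrite subKn // subSn ?leq_subr // subKn // -mulrBr coef_central_diff.
ring.
Qed.

End BinomialGeneratingPolynomial.

(* The closure instances are declared on the predicate, not on the qualifier Num.nneg. *)
Local Notation nonneg_coefs := (polyOver (@Num.Def.nneg_num_pred int)).

Lemma sum_bin_diff_nonneg_coefs m :
  \sum_(j < m.+1) ('C(m, j) * 'C(m.+1, j.+1))%:R * ('X + 1 : {poly int}) ^+ j.*2.+1
  - \sum_(j < m.+1) ('C(m, j) * 'C(m.+1, j))%:R * ('X + 1) ^+ j.*2 \is a nonneg_coefs.
Proof.
rewrite -coef_gen_m -coef_gen_mS coef_gen_diff addrK.
rewrite rpredM ?polyOverX // rpred_sum // => k _.
by rewrite -natrB ?leq_bin_central // !rpredM ?rpredX ?rpredD ?polyOverX ?rpred1 ?rpred_nat.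
Qed.

Theorem mainTheorem7 (n i : nat) (hi : (i < 2 * n)%N) :
  0 <= \sum_(i./2 <= j < n)
         ('C(n.-1, j)%:R : int) *
         (('C(n, j.+1) * 'C(j.*2.+1, i))%:R - ('C(n, j) * 'C(j.*2, i))%:R).
Proof.
case: n {hi} => [|m] /=; first by rewrite big_geq.
have bin_vanish j : (j < i./2)%N -> 'C(j.*2.+1, i) = 0%N /\ 'C(j.*2, i) = 0%N.
  move=> lt_j_half; have := odd_double_half i.
  by split; apply: bin_small; case: (odd i) => /=; lia.
rewrite (@big_nat_widenl _ _ _ i./2 0) // big_mkcond big_mkord /=.
move: (sum_bin_diff_nonneg_coefs m); set P := (_ - _) => /polyOverP/(_ i).
rewrite (_ : \sum_(j < m.+1) _ = P`_i) //.
rewrite coefB !coef_sum -sumrB; apply: eq_bigr => j _.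
rewrite !mulr_natl !coefMn [_ + 1]addrC -polyC1 !coef_CaddX_exp !expr1n.
case: leqP => [_ | /bin_vanish[-> ->]]; rewrite ?natrM; ring.
Qed.
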